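(* Let $C_1,C_2$ be maximal configurations of finite labeled prime event structures $\mathcal{E}_1=\langle E_1,<_1,\#_1,h_1\rangle$ and $\mathcal{E}_2=\langle E_2,<_2,\#_2,h_2\rangle$, respectively. Suppose $\varphi:C_1\to C_2$ is a necessary embedding that is not a sufficient embedding. Then there are concurrent events $e,e'\in C_1$ such that $\varphi(e)<_2\varphi(e')$.
   Context: A finite $\mathcal{X}$-labeled prime event structure has a finite event set, a strict partial order (causality), a labeling into $\mathcal{X}$, and a symmetric irreflexive conflict relation closed under causality; $\mathcal{X}$ contains $\varepsilon$; there is an event $\bot$ below all other events with label $\varepsilon$. A configuration is a left-closed, conflict-free set of events; maximal if no configuration strictly contains it. Events $e,e'$ are concurrent if $e\neq e'$, they are not causally ordered either way, and they are not in conflict. A necessary embedding $\varphi:C_1\to C_2$ is a bijection with $h_1(e)=h_2(\varphi(e))$ for all $e\in C_1$ and such that no $e\in C_1$ satisfies $e(<_1\cup<_2^\varphi)^+e$, where $<_2^\varphi=\{(\varphi^{-1}(a),\varphi^{-1}(b))\mid a,b\in C_2, a<_2b\}$ and $^+$ is transitive closure. A sufficient embedding is a label-preserving bijection $\varphi:C_1\to C_2$ such that $\varphi(e_1)<_2\varphi(e_2)$ implies $e_1<_1e_2$ for all $e_1,e_2\in C_1$. *)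

From Stdlib Require Import Relations.
From mathcomp Require Import all_boot.
Set Implicit Arguments. Unset Strict Implicit. Unset Printing Implicit Defensive.

(* A finite X-labeled prime event structure; eps : X is the silent label. *)
Record pes (X : Type) (eps : X) := Pes {
  ev : finType;
  caus : rel ev;
  conf : rel ev;
  lab : ev -> X;
  bot : ev;
  caus_irr : forall e, ~~ caus e e;
  caus_trans : forall e1 e2 e3, caus e1 e2 -> caus e2 e3 -> caus e1 e3;
  conf_irr : forall e, ~~ conf e e;
  conf_sym : forall e e', conf e e' = conf e' e;
  conf_her : forall e e' e'', conf e e' -> caus e' e'' -> conf e e'';
  bot_lab : lab bot = eps;
  bot_min : forall e, e != bot -> caus bot e
}.

Section Defs.
Variables (X : Type) (eps : X).

Definition configuration (E : pes eps) (C : {set ev E}) : Prop :=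
  (forall e e', e' \in C -> caus e e' -> e \in C) /\
  (forall e e', e \in C -> e' \in C -> ~~ conf e e').

Definition maximal_configuration (E : pes eps) (C : {set ev E}) : Prop :=
  configuration C /\ ~ (exists D : {set ev E}, configuration D /\ C \proper D).

Definition concurrent (E : pes eps) (e e' : ev E) : Prop :=
  e != e' /\ ~~ caus e e' /\ ~~ caus e' e /\ ~~ conf e e'.

(* phi : C1 -> C2 label-preserving bijection (phi given as a function on ev E1,
   only its restriction to C1 matters) *)
Definition label_bijection (E1 E2 : pes eps) (C1 : {set ev E1}) (C2 : {set ev E2})
    (phi : ev E1 -> ev E2) : Prop :=
  {in C1 &, injective phi} /\ phi @: C1 = C2 /\
  (forall e, e \in C1 -> lab e = lab (phi e)).

Definition caus_pull (E1 E2 : pes eps) (C1 : {set ev E1}) (phi : ev E1 -> ev E2)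
    : relation (ev E1) :=
  fun x y => [/\ x \in C1, y \in C1 & caus (phi x) (phi y)].

Definition necessary_embedding (E1 E2 : pes eps) (C1 : {set ev E1}) (C2 : {set ev E2})
    (phi : ev E1 -> ev E2) : Prop :=
  label_bijection C1 C2 phi /\
  ~ (exists e, e \in C1 /\
       clos_trans (ev E1) (fun x y => caus x y \/ caus_pull C1 phi x y) e e).

Definition sufficient_embedding (E1 E2 : pes eps) (C1 : {set ev E1}) (C2 : {set ev E2})
    (phi : ev E1 -> ev E2) : Prop :=
  label_bijection C1 C2 phi /\
  (forall e1 e2, e1 \in C1 -> e2 \in C1 -> caus (phi e1) (phi e2) -> caus e1 e2).

End Defs.

From Stdlib Require Import Relations.
From mathcomp Require Import all_boot.

Set Implicit Arguments.
Unset Strict Implicit.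

(* Failure of sufficiency yields e, e' in C1 with phi e <2 phi e' but not
   e <1 e'.  They are distinct since <2 is irreflexive, not in conflict since
   C1 is a configuration, and e' <1 e is impossible because together with the
   pulled-back step e <2^phi e' it would close a cycle of <1 u <2^phi, which a
   necessary embedding forbids. *)

Lemma caus_neq (X : Type) (eps : X) (E : pes eps) (e e' : ev E) :
  caus e e' -> e != e'.
Proof. by apply: contraTneq => ->; exact: caus_irr. Qed.

Section Embeddings.

Variables (X : Type) (eps : X) (E1 E2 : pes eps).
Variables (C1 : {set ev E1}) (C2 : {set ev E2}) (phi : ev E1 -> ev E2).

Lemma not_sufficient_embeddingP :
  label_bijection C1 C2 phi -> ~ sufficient_embedding C1 C2 phi ->
  exists e e', [/\ e \in C1, e' \in C1, caus (phi e) (phi e') & ~~ caus e e'].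
Proof.
move=> bij not_suff.
have [reflects | /forall_inPn[e eC1 /forall_inPn[e' e'C1]]] :=
  boolP [forall e in C1, forall e' in C1, caus (phi e) (phi e') ==> caus e e'].
  case: not_suff; split=> // e e' eC1 e'C1.
  by move: reflects => /forall_inP/(_ e eC1)/forall_inP/(_ e' e'C1)/implyP.
by rewrite negb_imply => /andP[phi_caus not_caus]; exists e, e'.
Qed.

Lemma necessary_embedding_caus_asym e e' :
  necessary_embedding C1 C2 phi -> e \in C1 -> e' \in C1 ->
  caus (phi e) (phi e') -> ~~ caus e' e.
Proof.
move=> [_ acyclic] eC1 e'C1 phi_caus; apply/negP => caus_e'e.
apply: acyclic; exists e; split=> //.
apply: (t_trans _ _ _ e'); apply: t_step; first by right.
by left.
Qed.

End Embeddings.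

Theorem lemma4 (X : Type) (eps : X) (E1 E2 : pes eps)
  (C1 : {set ev E1}) (C2 : {set ev E2}) (phi : ev E1 -> ev E2) :
  maximal_configuration C1 -> maximal_configuration C2 ->
  necessary_embedding C1 C2 phi -> ~ sufficient_embedding C1 C2 phi ->
  exists e e', [/\ e \in C1, e' \in C1, concurrent e e' & caus (phi e) (phi e')].
Proof.
move=> [[_ conflict_free] _] _ nec not_suff.
have [e [e' [eC1 e'C1 phi_caus not_caus]]] :=
  not_sufficient_embeddingP nec.1 not_suff.
exists e, e'; split=> //; split; last split=> //; last split.
- by apply: contraNneq (caus_neq phi_caus) => ->.
- exact: necessary_embedding_caus_asym nec eC1 e'C1 phi_caus.
- exact: conflict_free.
Qed.
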